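(* Suppose there is $x_0\in\mathbb{R}$ such that $k^2$ is continuous and piecewise continuously differentiable, nonincreasing on $(-\infty,x_0]$ and nondecreasing on $[x_0,\infty)$, with minimum value $k^2_{\min}$ (which may be negative). Let $\Delta>0$ satisfy $k^2_{\min}\le\Delta^2\le\min\{k_{+\infty}^2,k_{-\infty}^2\}$. Then $$T\ \ge\ \mathrm{sech}^2\left\{\frac12\ln\frac{k_{+\infty}k_{-\infty}}{\Delta^2}+\frac{\max_x\sqrt{\max\{0,\Delta^2-k^2(x)\}}}{\Delta}+\int_{\{x:\,k^2(x)<\Delta^2\}}\sqrt{\Delta^2-k^2}\;\mathrm{d}x\right\}.$$
   Context: Standing setup: $k^2:\mathbb{R}\to\mathbb{R}$ is a piecewise continuous function (it may be negative somewhere) with $k^2(x)\to k_{\pm\infty}^2$ as $x\to\pm\infty$, where $k_{\pm\infty}>0$ and $k^2-k_{\pm\infty}^2$ is integrable near $\pm\infty$. For the equation $u''+k^2(x)u=0$ there is a solution with $u(x)=e^{ik_{-\infty}x}+r\,e^{-ik_{-\infty}x}+o(1)$ as $x\to-\infty$ and $u(x)=\tau\,e^{ik_{+\infty}x}+o(1)$ as $x\to+\infty$; the transmission probability is $T=(k_{+\infty}/k_{-\infty})|\tau|^2$. Here $\mathrm{sech}=1/\cosh$. *)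

From Stdlib Require Import Reals Lra List.
Open Scope R_scope.

Definition sech (x : R) : R := / cosh x.

Definition lim_pinf (f : R -> R) (l : R) : Prop :=
  forall eps, 0 < eps -> exists M, forall x, M < x -> Rabs (f x - l) < eps.
Definition lim_minf (f : R -> R) (l : R) : Prop :=
  forall eps, 0 < eps -> exists M, forall x, x < M -> Rabs (f x - l) < eps.

Definition integrable_near_pinf (f : R -> R) : Prop :=
  exists M B, forall b (pr : Riemann_integrable (fun x => Rabs (f x)) M b),
    M <= b -> RiemannInt pr <= B.
Definition integrable_near_minf (f : R -> R) : Prop :=
  exists M B, forall a (pr : Riemann_integrable (fun x => Rabs (f x)) a M),
    a <= M -> RiemannInt pr <= B.

Definition piecewise_C1 (f : R -> R) : Prop :=
  exists (pts : list R) (d : R -> R),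
    forall x, ~ In x pts -> derivable_pt_lim f x (d x) /\ continuity_pt d x.

Definition improper_integral_R (g : R -> R) (I : R) : Prop :=
  (forall a b, a <= b -> exists pr : Riemann_integrable g a b, True) /\
  forall eps, 0 < eps -> exists M, forall a b (pr : Riemann_integrable g a b),
    a <= - M -> M <= b -> Rabs (RiemannInt pr - I) < eps.

Definition solves_real (k2 : R -> R) (v : R -> R) : Prop :=
  exists dv : R -> R,
    (forall x, derivable_pt_lim v x (dv x)) /\
    (forall x, derivable_pt_lim dv x (- k2 x * v x)).

(* Scattering solution u = ur + i ui with reflection r = rr + i ri and
   transmission tau = tr + i ti:
   u(x) = e^{i km x} + r e^{-i km x} + o(1)  (x -> -inf),
   u(x) = tau e^{i kp x} + o(1)              (x -> +inf). *)
Definition scattering_solution (k2 : R -> R) (km kp : R)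
  (ur ui : R -> R) (rr ri tr ti : R) : Prop :=
  solves_real k2 ur /\ solves_real k2 ui /\
  lim_minf (fun x => ur x - (cos (km * x) + rr * cos (km * x) + ri * sin (km * x))) 0 /\
  lim_minf (fun x => ui x - (sin (km * x) + ri * cos (km * x) - rr * sin (km * x))) 0 /\
  lim_pinf (fun x => ur x - (tr * cos (kp * x) - ti * sin (kp * x))) 0 /\
  lim_pinf (fun x => ui x - (tr * sin (kp * x) + ti * cos (kp * x))) 0.

Definition transmission (km kp tr ti : R) : R := (kp / km) * (tr ^ 2 + ti ^ 2).

(* Write u = ur + i ui for the scattering solution of u'' + k2 u = 0 and, for a weight h > 0, let
   S_h = |u'|^2 / h + h |u|^2 be its energy.  The Wronskian J = Im(conj(u) u') is constant and
   S_h^2 - 4 J^2 is a sum of two squares, so Y = S_h + sqrt(S_h^2 - 4 J^2 + eps) is well behaved; on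
   any interval where h is monotone, Y h^(+-1) exp(2 int q) is nondecreasing as soon as
   |h^2 - k2| <= 2 h q.  We take h = sqrt(Delta^2 + |k2 - Delta^2|) and the barrier
   q = sqrt(max(0, Delta^2 - k2)).  Cutting the line at x0 and at the points where k2 crosses Delta^2
   gives Y(x) <= Y(y) e^(2B) for x <= x0 <= y, where B is the argument of sech in the theorem.  At
   +-oo the solution is a superposition of free waves, so S_h tends to 2 km (1 + |r|^2) and 2 kp |tau|^2
   while J = km (1 - |r|^2) = kp |tau|^2.  Letting x -> -oo, y -> +oo and eps -> 0 gives
   2 km (1 + |r|^2) + 4 km |r| <= 2 kp |tau|^2 e^(2B), which is equivalent to T >= sech^2 B. *)

From Stdlib Require Import Reals Lra Psatz List Classical ClassicalEpsilon.
Open Scope R_scope.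

(* Rules for derivatives in the form [derivable_pt_lim f x l], with the value [l] given by an equation,
   so that they can be chained with [eapply] and the values checked afterwards by [ring]/[field]. *)

Lemma dlim_plus f g x a b l : derivable_pt_lim f x a -> derivable_pt_lim g x b ->
  l = a + b -> derivable_pt_lim (fun z => f z + g z) x l.
Proof. intros H1 H2 ->. exact (derivable_pt_lim_plus f g x a b H1 H2). Qed.

Lemma dlim_minus f g x a b l : derivable_pt_lim f x a -> derivable_pt_lim g x b ->
  l = a - b -> derivable_pt_lim (fun z => f z - g z) x l.
Proof. intros H1 H2 ->. exact (derivable_pt_lim_minus f g x a b H1 H2). Qed.

Lemma dlim_mult f g x a b l : derivable_pt_lim f x a -> derivable_pt_lim g x b ->
  l = a * g x + f x * b -> derivable_pt_lim (fun z => f z * g z) x l.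
Proof. intros H1 H2 ->. exact (derivable_pt_lim_mult f g x a b H1 H2). Qed.

Lemma dlim_opp f x a l : derivable_pt_lim f x a -> l = - a ->
  derivable_pt_lim (fun z => - f z) x l.
Proof. intros H ->. exact (derivable_pt_lim_opp f x a H). Qed.

Lemma dlim_const c x : derivable_pt_lim (fun _ => c) x 0.
Proof. exact (derivable_pt_lim_const c x). Qed.

Lemma dlim_id x : derivable_pt_lim (fun z => z) x 1.
Proof. exact (derivable_pt_lim_id x). Qed.

Lemma dlim_scal c f x a l : derivable_pt_lim f x a -> l = c * a ->
  derivable_pt_lim (fun z => c * f z) x l.
Proof. intros H ->. exact (derivable_pt_lim_scal f c x a H). Qed.

Lemma dlim_comp f g x a b l : derivable_pt_lim g x a -> derivable_pt_lim f (g x) b ->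
  l = b * a -> derivable_pt_lim (fun z => f (g z)) x l.
Proof. intros H1 H2 ->. exact (derivable_pt_lim_comp g f x a b H1 H2). Qed.

Lemma dlim_div f g x a b l : derivable_pt_lim f x a -> derivable_pt_lim g x b -> g x <> 0 ->
  l = (a * g x - b * f x) / g x ^ 2 -> derivable_pt_lim (fun z => f z / g z) x l.
Proof.
  intros H1 H2 H3 ->. replace (g x ^ 2) with (Rsqr (g x)) by (unfold Rsqr; ring).
  exact (derivable_pt_lim_div f g x a b H1 H2 H3).
Qed.

Lemma dlim_sq f x a l : derivable_pt_lim f x a -> l = 2 * f x * a ->
  derivable_pt_lim (fun z => f z ^ 2) x l.
Proof.
  intros H ->. apply (dlim_comp (fun y => y ^ 2) f x a (INR 2 * f x ^ pred 2));
    [exact H | apply derivable_pt_lim_pow | simpl; ring].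
Qed.

Lemma cont_plus f g x : continuity_pt f x -> continuity_pt g x ->
  continuity_pt (fun z => f z + g z) x.
Proof. intros; now apply (continuity_pt_plus f g x). Qed.

Lemma cont_minus f g x : continuity_pt f x -> continuity_pt g x ->
  continuity_pt (fun z => f z - g z) x.
Proof. intros; now apply (continuity_pt_minus f g x). Qed.

Lemma cont_mult f g x : continuity_pt f x -> continuity_pt g x ->
  continuity_pt (fun z => f z * g z) x.
Proof. intros; now apply (continuity_pt_mult f g x). Qed.

Lemma cont_div f g x : continuity_pt f x -> continuity_pt g x -> g x <> 0 ->
  continuity_pt (fun z => f z / g z) x.
Proof. intros; now apply (continuity_pt_div f g x). Qed.

Lemma cont_comp f g x : continuity_pt g x -> continuity_pt f (g x) ->
  continuity_pt (fun z => f (g z)) x.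
Proof. intros; now apply (continuity_pt_comp g f x). Qed.

Lemma cont_const c x : continuity_pt (fun _ => c) x.
Proof. apply continuity_pt_const. now intros a b. Qed.

Lemma cont_of_dlim f x l : derivable_pt_lim f x l -> continuity_pt f x.
Proof. intros H. apply derivable_continuous_pt. now exists l. Qed.

Lemma cont_id x : continuity_pt (fun z => z) x.
Proof. exact (cont_of_dlim _ x 1 (dlim_id x)). Qed.

Lemma cont_sq f x : continuity_pt f x -> continuity_pt (fun z => f z ^ 2) x.
Proof.
  intros H. apply (cont_comp (fun y => y ^ 2) f x H).
  eapply cont_of_dlim. apply derivable_pt_lim_pow.
Qed.

Lemma cont_ext f g x : (forall z, f z = g z) -> continuity_pt f x -> continuity_pt g x.
Proof.
  intros E H eps He. destruct (H eps He) as [a [Ha Hb]]. exists a. split; auto.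
  intros y Hy. simpl in *. rewrite <- !E. now apply Hb.
Qed.

Lemma nondecreasing_of_deriv_nonneg (L : list R) : forall f a b, a <= b ->
  (forall z, a <= z <= b -> continuity_pt f z) ->
  (forall z, a < z < b -> ~ In z L -> exists l, derivable_pt_lim f z l /\ 0 <= l) ->
  f a <= f b.
Proof.
  induction L as [|p L IH]; intros f a b Hab Hc Hd.
  - destruct (Req_dec a b) as [->|Hne]; [lra|].
    assert (pr1 : forall c, a < c < b -> derivable_pt f c).
    { intros c Hc'. destruct (constructive_indefinite_description _ (Hd c Hc' (in_nil (a:=c))))
        as [l [Hl _]]. now exists l. }
    assert (pr2 : forall c, a < c < b -> derivable_pt id c) by (intros; apply derivable_pt_id).
    destruct (MVT f id a b pr1 pr2 ltac:(lra) Hc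
               (fun c _ => derivable_continuous_pt _ _ (derivable_pt_id c))) as [c [P Heq]].
    rewrite (derive_pt_eq_0 id c 1 (pr2 c P) (derivable_pt_lim_id c)) in Heq. unfold id in Heq.
    destruct (Hd c P (in_nil (a:=c))) as [l [Hl Hl0]].
    rewrite (derive_pt_eq_0 f c l (pr1 c P) Hl) in Heq. nra.
  - assert (Hd' : forall u v, a <= u -> v <= b -> (u < p < v -> False) ->
                  forall z, u < z < v -> ~ In z L -> exists l, derivable_pt_lim f z l /\ 0 <= l).
    { intros u v Hu Hv Hp z Hz Hn. apply Hd; [lra|]. intros [E|E]; [subst; lra | tauto]. }
    destruct (classic (a < p < b)) as [Hp|Hp].
    + apply Rle_trans with (f p); apply IH; try lra; try (intros; apply Hc; lra);
        apply Hd'; lra.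
    + apply IH; auto. apply Hd'; lra.
Qed.

Lemma deriv_nonneg_of_mono f z l : derivable_pt_lim f z l ->
  (exists del, 0 < del /\ forall t, 0 < t < del -> f z <= f (z + t)) -> 0 <= l.
Proof.
  intros H [del [Hd Hm]]. destruct (Rle_dec 0 l) as [|Hn]; auto. exfalso.
  destruct (H (- l)) as [[dl Hdl] Hdd]; [lra|].
  set (t := Rmin (dl / 2) (del / 2)).
  assert (Ht : 0 < t) by (unfold t; apply Rmin_glb_lt; lra).
  assert (Ht1 : t < dl) by (unfold t; pose proof (Rmin_l (dl / 2) (del / 2)); simpl in *; lra).
  assert (Ht2 : t < del) by (unfold t; pose proof (Rmin_r (dl / 2) (del / 2)); lra).
  specialize (Hdd t ltac:(lra) ltac:(rewrite Rabs_right; simpl; lra)).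
  specialize (Hm t ltac:(lra)).
  assert (0 <= (f (z + t) - f z) / t) by (apply Rmult_le_pos; [lra | apply Rlt_le, Rinv_0_lt_compat; lra]).
  apply Rabs_def2 in Hdd. lra.
Qed.

Definition monotone_on (s : R) (f : R -> R) (a b : R) : Prop :=
  forall u v, a <= u -> u <= v -> v <= b -> 0 <= s * (f v - f u).

Lemma deriv_sign_of_monotone s f a b z l : monotone_on s f a b -> a < z < b ->
  derivable_pt_lim f z l -> 0 <= s * l.
Proof.
  intros Hm Hz Hd. apply (deriv_nonneg_of_mono (fun y => s * f y) z);
    [eapply dlim_scal; [exact Hd | reflexivity] |].
  exists (b - z). split; [lra|]. intros t Ht. specialize (Hm z (z + t) ltac:(lra) ltac:(lra) ltac:(lra)).
  lra.
Qed.

Lemma constant_of_deriv_zero f : (forall x, derivable_pt_lim f x 0) -> forall x y, f x = f y.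
Proof.
  intros H x y. destruct (Rtotal_order x y) as [Hl|[E|Hl]].
  - destruct (MVT_cor2 f (fun _ => 0) x y Hl (fun c _ => H c)) as [c [Hc _]]. lra.
  - now subst.
  - destruct (MVT_cor2 f (fun _ => 0) y x Hl (fun c _ => H c)) as [c [Hc _]]. lra.
Qed.

Lemma lim_minf_reflect f l : lim_minf f l <-> lim_pinf (fun x => f (- x)) l.
Proof.
  split; intros H eps He; destruct (H eps He) as [M HM]; exists (- M); intros x Hx.
  - apply HM. lra.
  - replace x with (- - x) by ring. apply HM. lra.
Qed.

Lemma lim_pinf_ext f g l : (forall x, f x = g x) -> lim_pinf f l -> lim_pinf g l.
Proof.
  intros E H eps He. destruct (H eps He) as [M HM]. exists M. intros x Hx. rewrite <- E. auto.
Qed.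

Lemma lim_pinf_const c : lim_pinf (fun _ => c) c.
Proof. intros eps He. exists 0. intros. rewrite Rminus_diag, Rabs_R0. lra. Qed.

Lemma lim_pinf_shift f l : lim_pinf f l <-> lim_pinf (fun x => f x - l) 0.
Proof.
  split; intros H eps He; destruct (H eps He) as [M HM]; exists M; intros x Hx;
    specialize (HM x Hx); now rewrite Rminus_0_r in *.
Qed.

Lemma lim_pinf_plus f g l m : lim_pinf f l -> lim_pinf g m ->
  lim_pinf (fun x => f x + g x) (l + m).
Proof.
  intros H1 H2 eps He. destruct (H1 (eps / 2)) as [M1 HM1]; [lra|].
  destruct (H2 (eps / 2)) as [M2 HM2]; [lra|]. exists (Rmax M1 M2). intros x Hx.
  pose proof (HM1 x (Rle_lt_trans _ _ _ (Rmax_l M1 M2) Hx)).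
  pose proof (HM2 x (Rle_lt_trans _ _ _ (Rmax_r M1 M2) Hx)).
  replace (f x + g x - (l + m)) with ((f x - l) + (g x - m)) by ring.
  eapply Rle_lt_trans; [apply Rabs_triang|]. lra.
Qed.

Lemma lim_pinf_plus0 f g : lim_pinf f 0 -> lim_pinf g 0 -> lim_pinf (fun x => f x + g x) 0.
Proof. intros. replace 0 with (0 + 0) by ring. now apply lim_pinf_plus. Qed.

Lemma lim_pinf_opp f l : lim_pinf f l -> lim_pinf (fun x => - f x) (- l).
Proof.
  intros H eps He. destruct (H eps He) as [M HM]. exists M. intros x Hx.
  replace (- f x - - l) with (- (f x - l)) by ring. rewrite Rabs_Ropp. auto.
Qed.

Lemma lim_pinf_opp0 f : lim_pinf f 0 -> lim_pinf (fun x => - f x) 0.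
Proof. intros H. rewrite <- Ropp_0. now apply lim_pinf_opp. Qed.

Definition bounded_near_pinf (f : R -> R) : Prop :=
  exists M N, forall x, N < x -> Rabs (f x) <= M.

Lemma bounded_of_lim f l : lim_pinf f l -> bounded_near_pinf f.
Proof.
  intros H. destruct (H 1) as [N HN]; [lra|]. exists (Rabs l + 1), N. intros x Hx.
  pose proof (HN x Hx). pose proof (Rabs_triang_inv (f x) l). lra.
Qed.

Lemma bounded_const c : bounded_near_pinf (fun _ => c).
Proof. exists (Rabs c), 0. intros. lra. Qed.

Lemma bounded_plus f g : bounded_near_pinf f -> bounded_near_pinf g ->
  bounded_near_pinf (fun x => f x + g x).
Proof.
  intros [M1 [N1 H1]] [M2 [N2 H2]]. exists (M1 + M2), (Rmax N1 N2). intros x Hx.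
  pose proof (H1 x (Rle_lt_trans _ _ _ (Rmax_l _ _) Hx)).
  pose proof (H2 x (Rle_lt_trans _ _ _ (Rmax_r _ _) Hx)).
  eapply Rle_trans; [apply Rabs_triang|]. lra.
Qed.

Lemma bounded_mult f g : bounded_near_pinf f -> bounded_near_pinf g ->
  bounded_near_pinf (fun x => f x * g x).
Proof.
  intros [M1 [N1 H1]] [M2 [N2 H2]]. exists (M1 * M2), (Rmax N1 N2). intros x Hx.
  pose proof (H1 x (Rle_lt_trans _ _ _ (Rmax_l _ _) Hx)).
  pose proof (H2 x (Rle_lt_trans _ _ _ (Rmax_r _ _) Hx)).
  rewrite Rabs_mult. apply Rmult_le_compat; auto; apply Rabs_pos.
Qed.

Lemma bounded_sq f : bounded_near_pinf f -> bounded_near_pinf (fun x => f x ^ 2).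
Proof.
  intros Hf. apply bounded_mult with (g := fun x => f x * 1); auto.
  apply bounded_mult; auto. apply bounded_const.
Qed.

Lemma bounded_of_close f g : lim_pinf (fun x => f x - g x) 0 -> bounded_near_pinf g ->
  bounded_near_pinf f.
Proof.
  intros H Hg. destruct (bounded_plus _ _ (bounded_of_lim _ _ H) Hg) as [M [N HM]].
  exists M, N. intros x Hx. specialize (HM x Hx).
  now replace (f x - g x + g x) with (f x) in HM by ring.
Qed.

Lemma lim_pinf_zero_mult f g : lim_pinf f 0 -> bounded_near_pinf g ->
  lim_pinf (fun x => f x * g x) 0.
Proof.
  intros H [M [N HN]] eps He.
  assert (HM : 0 < Rabs M + 1) by (pose proof (Rabs_pos M); lra).
  destruct (H (eps / (Rabs M + 1))) as [M1 HM1]; [now apply Rdiv_lt_0_compat|].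
  exists (Rmax M1 N). intros x Hx.
  pose proof (HM1 x (Rle_lt_trans _ _ _ (Rmax_l M1 N) Hx)) as A.
  pose proof (HN x (Rle_lt_trans _ _ _ (Rmax_r M1 N) Hx)) as B.
  rewrite Rminus_0_r in *. rewrite Rabs_mult.
  pose proof (Rle_abs M). pose proof (Rabs_pos (f x)).
  apply Rle_lt_trans with (Rabs (f x) * (Rabs M + 1)); [apply Rmult_le_compat_l; lra|].
  apply Rmult_lt_reg_r with (/ (Rabs M + 1)); [now apply Rinv_0_lt_compat|].
  now rewrite Rmult_assoc, Rinv_r, Rmult_1_r by lra.
Qed.

Lemma lim_pinf_bounded_mult_zero f g : lim_pinf f 0 -> bounded_near_pinf g ->
  lim_pinf (fun x => g x * f x) 0.
Proof.
  intros. apply lim_pinf_ext with (fun x => f x * g x); [intros; ring|].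
  now apply lim_pinf_zero_mult.
Qed.

Lemma lim_pinf_mult f g l m : lim_pinf f l -> lim_pinf g m ->
  lim_pinf (fun x => f x * g x) (l * m).
Proof.
  intros H1 H2. apply lim_pinf_shift.
  apply lim_pinf_ext with (fun x => (f x - l) * g x + (g x - m) * l); [intros; ring|].
  apply lim_pinf_plus0; apply lim_pinf_zero_mult.
  - exact (proj1 (lim_pinf_shift f l) H1).
  - eapply bounded_of_lim; eauto.
  - exact (proj1 (lim_pinf_shift g m) H2).
  - apply bounded_const.
Qed.

Lemma lim_pinf_comp f g l : lim_pinf f l -> continuity_pt g l ->
  lim_pinf (fun x => g (f x)) (g l).
Proof.
  intros H Hc eps He. destruct (Hc eps He) as [alp [Ha Hal]].
  destruct (H alp Ha) as [M HM]. exists M. intros x Hx.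
  destruct (Req_dec (f x) l) as [E|E].
  - rewrite E, Rminus_diag, Rabs_R0. lra.
  - apply (Hal (f x)). split; [split; [exact I | auto] | now apply HM].
Qed.

Lemma lim_pinf_sq_diff f g : bounded_near_pinf g -> lim_pinf (fun x => f x - g x) 0 ->
  lim_pinf (fun x => f x ^ 2 - g x ^ 2) 0.
Proof.
  intros Bg H. assert (Bf : bounded_near_pinf f) by (eapply bounded_of_close; eauto).
  apply lim_pinf_ext with (fun x => (f x - g x) * (f x + g x)); [intros; ring|].
  apply lim_pinf_zero_mult; auto. now apply bounded_plus.
Qed.

Lemma lim_pinf_const_zero c : lim_pinf (fun _ => c) 0 -> c = 0.
Proof.
  intros H. destruct (Req_dec c 0) as [|Hn]; auto. exfalso.
  destruct (H (Rabs c)) as [M HM]; [now apply Rabs_pos_lt|].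
  specialize (HM (M + 1) ltac:(lra)). rewrite Rminus_0_r in HM. lra.
Qed.

Lemma lim_le_across f g l m x0 : lim_minf f l -> lim_pinf g m ->
  (forall x y, x <= x0 -> x0 <= y -> f x <= g y) -> l <= m.
Proof.
  intros H1 H2 Hle. destruct (Rle_dec l m) as [|Hn]; auto. exfalso.
  destruct (H1 ((l - m) / 2)) as [M1 HM1]; [lra|].
  destruct (H2 ((l - m) / 2)) as [M2 HM2]; [lra|].
  set (x := Rmin (M1 - 1) x0). set (y := Rmax (M2 + 1) x0).
  pose proof (Rmin_l (M1 - 1) x0). pose proof (Rmin_r (M1 - 1) x0).
  pose proof (Rmax_l (M2 + 1) x0). pose proof (Rmax_r (M2 + 1) x0).
  specialize (HM1 x ltac:(unfold x; lra)). specialize (HM2 y ltac:(unfold y; lra)).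
  specialize (Hle x y ltac:(unfold x; lra) ltac:(unfold y; lra)).
  apply Rabs_def2 in HM1. apply Rabs_def2 in HM2. lra.
Qed.

Lemma le_lim_of_nondecreasing f l x0 : lim_pinf f l ->
  (forall x y, x0 <= x -> x <= y -> f x <= f y) -> forall x, x0 <= x -> f x <= l.
Proof.
  intros Hlim Hinc x Hx. apply Rnot_lt_le. intros Hlt.
  destruct (Hlim (f x - l)) as [M HM]; [lra|].
  pose proof (Rmax_l x (M + 1)). pose proof (Rmax_r x (M + 1)).
  specialize (HM (Rmax x (M + 1)) ltac:(lra)).
  pose proof (Hinc x (Rmax x (M + 1)) Hx ltac:(lra)).
  apply Rabs_def2 in HM. lra.
Qed.

(* If w -> 0 and w'' -> 0 at +oo then w' -> 0 (mean value theorem twice on [x, x+1]). *)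
Lemma lim_deriv_zero (w dw ddw : R -> R) : (forall x, derivable_pt_lim w x (dw x)) ->
  (forall x, derivable_pt_lim dw x (ddw x)) -> lim_pinf w 0 -> lim_pinf ddw 0 -> lim_pinf dw 0.
Proof.
  intros Hw Hdw H1 H2 eps He.
  destruct (H1 (eps / 4)) as [M1 HM1]; [lra|].
  destruct (H2 (eps / 2)) as [M2 HM2]; [lra|].
  exists (Rmax M1 M2). intros x Hx.
  pose proof (Rmax_l M1 M2). pose proof (Rmax_r M1 M2).
  destruct (MVT_cor2 w dw x (x + 1) ltac:(lra) (fun c _ => Hw c)) as [c [Hc1 Hc2]].
  destruct (MVT_cor2 dw ddw x c ltac:(lra) (fun c _ => Hdw c)) as [c' [Hc1' Hc2']].
  pose proof (HM1 x ltac:(lra)). pose proof (HM1 (x + 1) ltac:(lra)).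
  pose proof (HM2 c' ltac:(lra)).
  rewrite Rminus_0_r in *.
  replace (x + 1 - x) with 1 in Hc1 by ring. rewrite Rmult_1_r in Hc1.
  assert (Rabs (dw c) < eps / 2).
  { rewrite <- Hc1. eapply Rle_lt_trans; [apply Rabs_triang|]. rewrite Rabs_Ropp. lra. }
  assert (Rabs (dw c - dw x) <= eps / 2).
  { rewrite Hc1', Rabs_mult, (Rabs_right (c - x)) by lra.
    apply Rle_trans with (eps / 2 * 1); [|lra].
    apply Rmult_le_compat; try lra; apply Rabs_pos. }
  replace (dw x) with (dw c - (dw c - dw x)) by ring.
  eapply Rle_lt_trans; [apply Rabs_triang|]. rewrite Rabs_Ropp. lra.
Qed.

Definition wave (a b k x : R) : R := a * cos (k * x) + b * sin (k * x).
Definition dwave (a b k x : R) : R := k * (- a * sin (k * x) + b * cos (k * x)).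

Lemma dlim_cos_lin k x : derivable_pt_lim (fun z => cos (k * z)) x (- k * sin (k * x)).
Proof.
  eapply dlim_comp; [eapply dlim_scal; [apply dlim_id | reflexivity] | apply derivable_pt_lim_cos | ring].
Qed.

Lemma dlim_sin_lin k x : derivable_pt_lim (fun z => sin (k * z)) x (k * cos (k * x)).
Proof.
  eapply dlim_comp; [eapply dlim_scal; [apply dlim_id | reflexivity] | apply derivable_pt_lim_sin | ring].
Qed.

Lemma wave_deriv a b k x : derivable_pt_lim (wave a b k) x (dwave a b k x).
Proof.
  unfold wave, dwave. eapply dlim_plus; [eapply dlim_scal; [apply dlim_cos_lin | reflexivity]
    | eapply dlim_scal; [apply dlim_sin_lin | reflexivity] | ring].
Qed.

Lemma dwave_deriv a b k x : derivable_pt_lim (dwave a b k) x (- k ^ 2 * wave a b k x).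
Proof.
  unfold wave, dwave. eapply dlim_scal; [eapply dlim_plus |].
  - eapply dlim_scal; [apply dlim_sin_lin | reflexivity].
  - eapply dlim_scal; [apply dlim_cos_lin | reflexivity].
  - reflexivity.
  - ring.
Qed.

Lemma trig_bound_comb a b t : Rabs (a * cos t + b * sin t) <= Rabs a + Rabs b.
Proof.
  eapply Rle_trans; [apply Rabs_triang|]. rewrite !Rabs_mult.
  pose proof (COS_bound t). pose proof (SIN_bound t).
  assert (Rabs (cos t) <= 1) by (apply Rabs_le; lra).
  assert (Rabs (sin t) <= 1) by (apply Rabs_le; lra).
  pose proof (Rabs_pos a). pose proof (Rabs_pos b).
  pose proof (Rabs_pos (cos t)). pose proof (Rabs_pos (sin t)). nra.
Qed.

Lemma wave_bounded a b k : bounded_near_pinf (wave a b k).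
Proof. exists (Rabs a + Rabs b), 0. intros x _. apply trig_bound_comb. Qed.

Lemma dwave_bounded a b k : bounded_near_pinf (dwave a b k).
Proof.
  exists (Rabs k * (Rabs (- a) + Rabs b)), 0. intros x _. unfold dwave.
  rewrite Rabs_mult. apply Rmult_le_compat_l; [apply Rabs_pos|].
  replace (- a * sin (k * x) + b * cos (k * x)) with (b * cos (k * x) + - a * sin (k * x)) by ring.
  rewrite (Rplus_comm (Rabs (- a))). apply trig_bound_comb.
Qed.

Lemma sin_cos_sq t : sin t ^ 2 + cos t ^ 2 = 1.
Proof. pose proof (sin2_cos2 t). unfold Rsqr in H. simpl. lra. Qed.

Lemma wave_wronskian a b c d k x :
  wave a b k x * dwave c d k x - wave c d k x * dwave a b k x = k * (a * d - b * c).
Proof.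
  unfold wave, dwave. pose proof (sin_cos_sq (k * x)) as E.
  set (s := sin (k * x)) in *. set (co := cos (k * x)) in *.
  transitivity (k * (a * d - b * c) * (s ^ 2 + co ^ 2)); [ring | rewrite E; ring].
Qed.

Lemma wave_energy a b c d k x : k <> 0 ->
  (dwave a b k x ^ 2 + dwave c d k x ^ 2) / k + k * (wave a b k x ^ 2 + wave c d k x ^ 2) =
  k * (a ^ 2 + b ^ 2 + c ^ 2 + d ^ 2).
Proof.
  intros Hk. unfold wave, dwave. pose proof (sin_cos_sq (k * x)) as E.
  set (s := sin (k * x)) in *. set (co := cos (k * x)) in *.
  transitivity (k * (a ^ 2 + b ^ 2 + c ^ 2 + d ^ 2) * (s ^ 2 + co ^ 2)); [field; auto | rewrite E; ring].
Qed.

Definition solution (k2 v dv : R -> R) : Prop :=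
  (forall x, derivable_pt_lim v x (dv x)) /\ (forall x, derivable_pt_lim dv x (- k2 x * v x)).

Lemma solution_reflect k2 v dv : solution k2 v dv ->
  solution (fun x => k2 (- x)) (fun x => v (- x)) (fun x => - dv (- x)).
Proof.
  intros [Hv Hdv]. split; intros x.
  - eapply dlim_comp; [eapply dlim_opp; [apply dlim_id | reflexivity] | apply Hv | ring].
  - eapply dlim_opp; [eapply dlim_comp; [eapply dlim_opp; [apply dlim_id | reflexivity]
      | apply Hdv | reflexivity] | ring].
Qed.

(* A solution that approaches a free wave of the limiting wavenumber does so together with its
   derivative: the difference w = v - wave satisfies w'' = -k2 w - (k2 - k^2) wave -> 0. *)
Lemma solution_deriv_asymptotics k2 v dv k a b : solution k2 v dv -> lim_pinf k2 (k ^ 2) ->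
  lim_pinf (fun x => v x - wave a b k x) 0 -> lim_pinf (fun x => dv x - dwave a b k x) 0.
Proof.
  intros [Hv Hdv] Hk Hq.
  apply lim_deriv_zero with (w := fun x => v x - wave a b k x)
    (ddw := fun x => - k2 x * (v x - wave a b k x) - (k2 x - k ^ 2) * wave a b k x); auto.
  - intros x. eapply dlim_minus; [apply Hv | apply wave_deriv | reflexivity].
  - intros x. eapply dlim_minus; [apply Hdv | apply dwave_deriv | ring].
  - apply lim_pinf_ext with
      (fun x => (- k2 x) * (v x - wave a b k x) + - ((k2 x - k ^ 2) * wave a b k x)); [intros; ring|].
    replace 0 with (- k ^ 2 * 0 + - 0) by ring.
    apply lim_pinf_plus; [apply lim_pinf_mult; auto; now apply lim_pinf_opp |].
    apply lim_pinf_opp, lim_pinf_zero_mult; [exact (proj1 (lim_pinf_shift _ _) Hk) | apply wave_bounded].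
Qed.

(* Energy of u = ur + i ui with derivative u' = dur + i dui, relative to the weight h > 0,
   and the Wronskian Im(conj(u) u'). *)
Definition energy (ur ui dur dui : R -> R) (h x : R) : R :=
  (dur x ^ 2 + dui x ^ 2) / h + h * (ur x ^ 2 + ui x ^ 2).
Definition wronskian (ur ui dur dui : R -> R) (x : R) : R := ur x * dui x - ui x * dur x.

Lemma wronskian_const k2 ur ui dur dui : solution k2 ur dur -> solution k2 ui dui ->
  forall x, wronskian ur ui dur dui x = wronskian ur ui dur dui 0.
Proof.
  intros [Hur Hdur] [Hui Hdui] x. apply constant_of_deriv_zero. intros z. unfold wronskian.
  eapply dlim_minus; [eapply dlim_mult; [apply Hur | apply Hdui | reflexivity]
    | eapply dlim_mult; [apply Hui | apply Hdur | reflexivity] | ring].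
Qed.

Section AsymptoticallyClose.
Variables (ur ui dur dui qa qb dqa dqb : R -> R).
Hypotheses (Ba : bounded_near_pinf qa) (Bb : bounded_near_pinf qb)
  (Bda : bounded_near_pinf dqa) (Bdb : bounded_near_pinf dqb).
Hypotheses (Ea : lim_pinf (fun x => ur x - qa x) 0) (Eb : lim_pinf (fun x => ui x - qb x) 0)
  (Eda : lim_pinf (fun x => dur x - dqa x) 0) (Edb : lim_pinf (fun x => dui x - dqb x) 0).

Lemma wronskian_close :
  lim_pinf (fun x => wronskian ur ui dur dui x - (qa x * dqb x - qb x * dqa x)) 0.
Proof.
  assert (Bdui : bounded_near_pinf dui) by (eapply bounded_of_close; eauto).
  assert (Bdur : bounded_near_pinf dur) by (eapply bounded_of_close; eauto).
  apply lim_pinf_ext with (fun x => ((ur x - qa x) * dui x + qa x * (dui x - dqb x)) +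
     (- ((ui x - qb x) * dur x) + - (qb x * (dur x - dqa x)))); [intros; unfold wronskian; ring|].
  apply lim_pinf_plus0; apply lim_pinf_plus0; try apply lim_pinf_opp0;
    auto using lim_pinf_zero_mult, lim_pinf_bounded_mult_zero.
Qed.

Lemma energy_close h k : lim_pinf h k -> 0 < k ->
  lim_pinf (fun x => energy ur ui dur dui (h x) x -
     ((dqa x ^ 2 + dqb x ^ 2) / k + k * (qa x ^ 2 + qb x ^ 2))) 0.
Proof.
  intros Hh Hk.
  assert (Hinv : lim_pinf (fun x => 1 / h x) (1 / k)).
  { apply (lim_pinf_comp h (fun y => 1 / y)); auto.
    apply cont_div; [apply cont_const | apply cont_id | lra]. }
  destruct (Hh (k / 2)) as [N0 HN0]; [lra|].
  assert (EU : lim_pinf (fun x => (dur x ^ 2 + dui x ^ 2) - (dqa x ^ 2 + dqb x ^ 2)) 0).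
  { apply lim_pinf_ext with (fun x => (dur x ^ 2 - dqa x ^ 2) + (dui x ^ 2 - dqb x ^ 2));
      [intros; ring|].
    apply lim_pinf_plus0; now apply lim_pinf_sq_diff. }
  assert (EV : lim_pinf (fun x => (ur x ^ 2 + ui x ^ 2) - (qa x ^ 2 + qb x ^ 2)) 0).
  { apply lim_pinf_ext with (fun x => (ur x ^ 2 - qa x ^ 2) + (ui x ^ 2 - qb x ^ 2)); [intros; ring|].
    apply lim_pinf_plus0; now apply lim_pinf_sq_diff. }
  assert (L : lim_pinf (fun x =>
     ((dur x ^ 2 + dui x ^ 2) - (dqa x ^ 2 + dqb x ^ 2)) * (1 / h x) +
     (dqa x ^ 2 + dqb x ^ 2) * (1 / h x - 1 / k) +
     (h x * ((ur x ^ 2 + ui x ^ 2) - (qa x ^ 2 + qb x ^ 2)) +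
      (h x - k) * (qa x ^ 2 + qb x ^ 2))) 0).
  { apply lim_pinf_plus0; apply lim_pinf_plus0.
    - apply lim_pinf_zero_mult; auto. eapply bounded_of_lim; eauto.
    - apply lim_pinf_bounded_mult_zero; [exact (proj1 (lim_pinf_shift _ _) Hinv) |].
      apply bounded_plus; now apply bounded_sq.
    - apply lim_pinf_bounded_mult_zero; auto. eapply bounded_of_lim; eauto.
    - apply lim_pinf_zero_mult; [exact (proj1 (lim_pinf_shift _ _) Hh) |].
      apply bounded_plus; now apply bounded_sq. }
  intros eps He. destruct (L eps He) as [M HM]. exists (Rmax M N0). intros x Hx.
  pose proof (HN0 x (Rle_lt_trans _ _ _ (Rmax_r _ _) Hx)) as Hx0. apply Rabs_def2 in Hx0.
  specialize (HM x (Rle_lt_trans _ _ _ (Rmax_l _ _) Hx)).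
  unfold energy. replace (_ - _ - 0) with (((dur x ^ 2 + dui x ^ 2) - (dqa x ^ 2 + dqb x ^ 2)) * (1 / h x) +
     (dqa x ^ 2 + dqb x ^ 2) * (1 / h x - 1 / k) +
     (h x * ((ur x ^ 2 + ui x ^ 2) - (qa x ^ 2 + qb x ^ 2)) +
      (h x - k) * (qa x ^ 2 + qb x ^ 2)) - 0); [exact HM | field; lra].
Qed.

End AsymptoticallyClose.

Lemma free_wave_asymptotics k2 ur ui dur dui h k a b c d : 0 < k ->
  solution k2 ur dur -> solution k2 ui dui -> lim_pinf k2 (k ^ 2) -> lim_pinf h k ->
  lim_pinf (fun x => ur x - wave a b k x) 0 -> lim_pinf (fun x => ui x - wave c d k x) 0 ->
  lim_pinf (fun x => energy ur ui dur dui (h x) x) (k * (a ^ 2 + b ^ 2 + c ^ 2 + d ^ 2)) /\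
  wronskian ur ui dur dui 0 = k * (a * d - b * c).
Proof.
  intros Hk Hur Hui Hk2 Hh Ha Hc.
  pose proof (solution_deriv_asymptotics _ _ _ _ _ _ Hur Hk2 Ha) as Hda.
  pose proof (solution_deriv_asymptotics _ _ _ _ _ _ Hui Hk2 Hc) as Hdc.
  pose proof (wave_bounded a b k) as Bab. pose proof (wave_bounded c d k) as Bcd.
  pose proof (dwave_bounded a b k) as Bdab. pose proof (dwave_bounded c d k) as Bdcd.
  split.
  - apply (proj2 (lim_pinf_shift _ _)).
    eapply lim_pinf_ext; [| apply (energy_close _ _ _ _ _ _ _ _ Bab Bcd Bdab Bdcd Ha Hc Hda Hdc h k Hh Hk)].
    intros x. cbv beta. now rewrite wave_energy by lra.
  - enough (wronskian ur ui dur dui 0 - k * (a * d - b * c) = 0) by lra.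
    apply lim_pinf_const_zero.
    eapply lim_pinf_ext; [| apply (wronskian_close _ _ _ _ _ _ _ _ Bab Bcd Bdab Bdcd Ha Hc Hda Hdc)].
    intros x. cbv beta. now rewrite wave_wronskian, (wronskian_const k2 ur ui dur dui Hur Hui x).
Qed.

(* Regularization Y = S + sqrt(S^2 - 4 J^2 + eps) of an energy value S, for eps > 0; it keeps the
   square root away from 0, so that Y is differentiable along the solution. *)
Definition regularized (J eps S : R) : R := S + sqrt (S ^ 2 - 4 * J ^ 2 + eps).

Lemma energy_square_identity ur ui dur dui h x : 0 < h ->
  energy ur ui dur dui h x ^ 2 - 4 * wronskian ur ui dur dui x ^ 2 =
  (2 * (ur x * dur x + ui x * dui x)) ^ 2 +
  (h * (ur x ^ 2 + ui x ^ 2) - (dur x ^ 2 + dui x ^ 2) / h) ^ 2.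
Proof. intros. unfold energy, wronskian. field. lra. Qed.

Lemma energy_nonneg ur ui dur dui h x : 0 < h -> 0 <= energy ur ui dur dui h x.
Proof.
  intros. unfold energy. apply Rplus_le_le_0_compat.
  - apply Rmult_le_pos; [nra | apply Rlt_le, Rinv_0_lt_compat; lra].
  - apply Rmult_le_pos; nra.
Qed.

Lemma regularized_nonneg J eps S : 0 <= S -> 0 <= regularized J eps S.
Proof. intros. unfold regularized. pose proof (sqrt_pos (S ^ 2 - 4 * J ^ 2 + eps)). lra. Qed.

(* With S the energy, R = sqrt(S^2 - 4J^2 + eps) and
   S^2 - 4J^2 = X^2 + Z^2, the derivative of the energy is S' = X (h - k2/h) + (h'/h) Z, and
   |X|, |Z| <= R.  If h' has sign s and |h^2 - k2| <= 2 h q, then the derivative of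
   (S + R) h^s e^(2P) with P' = q, namely (S' + S S' / R) E + (S + R) E (s h'/h + 2 q), is >= 0. *)
Lemma growth_pointwise S R X Z J eps h k2 q dh s E :
  0 < h -> 0 < eps -> R = sqrt (S ^ 2 - 4 * J ^ 2 + eps) -> S ^ 2 - 4 * J ^ 2 = X ^ 2 + Z ^ 2 ->
  Rabs (h ^ 2 - k2) <= 2 * h * q -> 0 <= s * dh -> (s = 1 \/ s = -1) -> 0 <= S -> 0 < E ->
  let dS := X * (h - k2 / h) + dh / h * Z in
  0 <= (dS + / (2 * R) * (2 * S * dS)) * E + (S + R) * (E * (s * (/ h * dh) + 2 * q)).
Proof.
  intros Hh He HR HSZ Hk Hsd Hs HS HE dS.
  assert (HR2 : R ^ 2 = X ^ 2 + Z ^ 2 + eps).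
  { rewrite HR, <- HSZ, pow2_sqrt; [ring|]. rewrite HSZ. nra. }
  assert (HRp : 0 < R) by (rewrite HR; apply sqrt_lt_R0; rewrite HSZ; nra).
  assert (HX : Rabs X <= R) by (apply Rabs_le; split; nra).
  assert (HZ : Rabs Z <= R) by (apply Rabs_le; split; nra).
  assert (Hb : Rabs (dh / h) = s * (/ h * dh)).
  { unfold Rdiv. rewrite Rabs_mult, Rabs_inv, (Rabs_right h) by lra.
    destruct Hs as [-> | ->]; [rewrite Rabs_right by nra | rewrite Rabs_left1 by nra]; ring. }
  assert (Ha : Rabs (h - k2 / h) <= 2 * q).
  { replace (h - k2 / h) with ((h ^ 2 - k2) / h) by (field; lra).
    unfold Rdiv. rewrite Rabs_mult, Rabs_inv, (Rabs_right h) by lra.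
    apply Rmult_le_reg_r with h; auto. rewrite Rmult_assoc, Rinv_l by lra. lra. }
  assert (HdS : Rabs dS <= R * (s * (/ h * dh) + 2 * q)).
  { unfold dS. eapply Rle_trans; [apply Rabs_triang|]. rewrite !Rabs_mult, Hb.
    pose proof (Rabs_pos X). pose proof (Rabs_pos Z). pose proof (Rabs_pos (h - k2 / h)).
    assert (0 <= s * (/ h * dh)) by (rewrite <- Hb; apply Rabs_pos).
    nra. }
  replace ((dS + / (2 * R) * (2 * S * dS)) * E + (S + R) * (E * (s * (/ h * dh) + 2 * q)))
    with ((S + R) * E / R * (dS + R * (s * (/ h * dh) + 2 * q))) by (field; lra).
  apply Rmult_le_pos.
  - apply Rmult_le_pos; [apply Rmult_le_pos; lra | apply Rlt_le, Rinv_0_lt_compat; lra].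
  - pose proof (Rle_abs (- dS)). rewrite Rabs_Ropp in *. lra.
Qed.

Section EnergyGrowth.
Variables (k2 ur ui dur dui : R -> R) (J : R).
Hypotheses (Hur : solution k2 ur dur) (Hui : solution k2 ui dui).
Hypothesis HJ : forall x, wronskian ur ui dur dui x = J.

Lemma energy_deriv (h : R -> R) x dh : derivable_pt_lim h x dh -> h x <> 0 ->
  derivable_pt_lim (fun z => energy ur ui dur dui (h z) z) x
    (2 * (ur x * dur x + ui x * dui x) * (h x - k2 x / h x) +
     dh / h x * (h x * (ur x ^ 2 + ui x ^ 2) - (dur x ^ 2 + dui x ^ 2) / h x)).
Proof.
  destruct Hur as [H1 H2]. destruct Hui as [H3 H4]. intros H5 H6. unfold energy.
  eapply dlim_plus.
  - eapply dlim_div; [eapply dlim_plus; [eapply dlim_sq; [apply H2 | reflexivity]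
      | eapply dlim_sq; [apply H4 | reflexivity] | reflexivity] | exact H5 | exact H6 | reflexivity].
  - eapply dlim_mult; [exact H5 | eapply dlim_plus; [eapply dlim_sq; [apply H1 | reflexivity]
      | eapply dlim_sq; [apply H3 | reflexivity] | reflexivity] | reflexivity].
  - field. exact H6.
Qed.

Lemma energy_cont (h : R -> R) x : continuity_pt h x -> h x <> 0 ->
  continuity_pt (fun z => energy ur ui dur dui (h z) z) x.
Proof.
  destruct Hur as [H1 H2]. destruct Hui as [H3 H4]. intros H5 H6. unfold energy.
  apply cont_plus; [apply cont_div | apply cont_mult]; auto; eapply cont_of_dlim.
  - eapply dlim_plus; [eapply dlim_sq; [apply H2 | reflexivity]
      | eapply dlim_sq; [apply H4 | reflexivity] | reflexivity].
  - eapply dlim_plus; [eapply dlim_sq; [apply H1 | reflexivity]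
      | eapply dlim_sq; [apply H3 | reflexivity] | reflexivity].
Qed.

Lemma energy_growth (h dh q : R -> R) (eps s a b : R) (pts : list R)
  (pr : Riemann_integrable q a b) :
  0 < eps -> a <= b -> (s = 1 \/ s = -1) ->
  (forall z, a <= z <= b -> continuity_pt h z /\ 0 < h z /\ continuity_pt q z) ->
  (forall z, a < z < b -> ~ In z pts -> derivable_pt_lim h z (dh z) /\ 0 <= s * dh z) ->
  (forall z, a <= z <= b -> Rabs (h z ^ 2 - k2 z) <= 2 * h z * q z) ->
  regularized J eps (energy ur ui dur dui (h a) a) * exp (s * ln (h a)) <=
  regularized J eps (energy ur ui dur dui (h b) b) * exp (s * ln (h b)) * exp (2 * RiemannInt pr).
Proof.
  intros Heps Hab Hs Hreg Hdh Hk.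
  assert (Cq : forall z, a <= z <= b -> continuity_pt q z) by (intros; apply Hreg; auto).
  set (P := primitive Hab (FTC_P1 Hab Cq)).
  assert (HP : forall z, a <= z <= b -> derivable_pt_lim P z (q z)) by (intros; now apply RiemannInt_P28).
  assert (HI : RiemannInt pr = P b - P a) by apply RiemannInt_P20.
  set (S := fun z => energy ur ui dur dui (h z) z).
  set (Psi := fun z => regularized J eps (S z) * exp (s * ln (h z) + 2 * P z)).
  assert (Hpos : forall z, a <= z <= b -> 0 < S z ^ 2 - 4 * J ^ 2 + eps).
  { intros z Hz. destruct (Hreg z Hz) as [_ [Hh _]]. unfold S.
    rewrite <- (HJ z), energy_square_identity by exact Hh.
    pose proof (pow2_ge_0 (2 * (ur z * dur z + ui z * dui z))).
    pose proof (pow2_ge_0 (h z * (ur z ^ 2 + ui z ^ 2) - (dur z ^ 2 + dui z ^ 2) / h z)). lra. }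
  assert (Hmono : Psi a <= Psi b).
  { apply (nondecreasing_of_deriv_nonneg pts); [exact Hab | |].
    - intros z Hz. destruct (Hreg z Hz) as [Hc [Hh _]].
      assert (HcS : continuity_pt S z) by (apply energy_cont; auto; lra).
      unfold Psi, regularized. apply cont_mult.
      + apply cont_plus; [exact HcS|]. apply cont_comp.
        * apply cont_plus; [apply cont_minus; [now apply cont_sq | apply cont_const] | apply cont_const].
        * apply continuity_pt_sqrt. apply Rlt_le, Hpos; auto.
      + apply cont_comp; [apply cont_plus; apply cont_mult; try apply cont_const |].
        * apply cont_comp; auto. eapply cont_of_dlim. apply derivable_pt_lim_ln. lra.
        * eapply cont_of_dlim. now apply HP.
        * eapply cont_of_dlim. apply derivable_pt_lim_exp.
    - intros z Hz Hn. destruct (Hdh z Hz Hn) as [Hd Hsd].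
      destruct (Hreg z ltac:(lra)) as [_ [Hh _]].
      assert (HdS := energy_deriv h z (dh z) Hd ltac:(lra)). fold S in HdS.
      eexists; split.
      + unfold Psi, regularized. eapply dlim_mult.
        * eapply dlim_plus; [exact HdS | eapply dlim_comp | reflexivity].
          -- eapply dlim_plus; [eapply dlim_minus; [eapply dlim_sq; [exact HdS | reflexivity]
               | apply dlim_const | reflexivity] | apply dlim_const | reflexivity].
          -- apply derivable_pt_lim_sqrt. apply Hpos; lra.
          -- reflexivity.
        * eapply dlim_comp; [eapply dlim_plus | apply derivable_pt_lim_exp | reflexivity].
          -- eapply dlim_scal; [eapply dlim_comp; [exact Hd | apply derivable_pt_lim_ln; lra
               | reflexivity] | reflexivity].
          -- eapply dlim_scal; [apply HP; lra | reflexivity].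
          -- reflexivity.
        * reflexivity.
      + eapply Rle_trans; [apply (growth_pointwise (S z) (sqrt (S z ^ 2 - 4 * J ^ 2 + eps))
           (2 * (ur z * dur z + ui z * dui z)) (h z * (ur z ^ 2 + ui z ^ 2) - (dur z ^ 2 + dui z ^ 2) / h z)
           J eps (h z) (k2 z) (q z) (dh z) s (exp (s * ln (h z) + 2 * P z))) | right; ring];
        auto using exp_pos.
        * unfold S. rewrite <- (HJ z). now apply energy_square_identity.
        * apply Hk; lra.
        * now apply energy_nonneg. }
  unfold Psi in Hmono. rewrite !exp_plus in Hmono.
  rewrite HI, Rmult_minus_distr_l, Rminus_def, exp_plus, exp_Ropp.
  pose proof (exp_pos (2 * P a)). pose proof (exp_pos (2 * P b)).
  apply Rmult_le_reg_r with (exp (2 * P a)); auto.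
  fold (S a) (S b).
  replace (regularized J eps (S b) * exp (s * ln (h b)) * (exp (2 * P b) * / exp (2 * P a)) * exp (2 * P a))
    with (regularized J eps (S b) * (exp (s * ln (h b)) * exp (2 * P b))) by (field; lra).
  lra.
Qed.

End EnergyGrowth.

(* The barrier q = sqrt(max(0, Delta^2 - k2)) and the comparison weight
   h = sqrt(Delta^2 + |k2 - Delta^2|), which equals sqrt(k2) where k2 >= Delta^2 and
   sqrt(2 Delta^2 - k2) where k2 <= Delta^2; in both cases |h^2 - k2| <= 2 h q. *)
Definition barrier (Delta : R) (k2 : R -> R) (x : R) : R := sqrt (Rmax 0 (Delta ^ 2 - k2 x)).
Definition weight (Delta : R) (k2 : R -> R) (x : R) : R := sqrt (Delta ^ 2 + Rabs (k2 x - Delta ^ 2)).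

Lemma weight_ge Delta k2 x : 0 < Delta -> Delta <= weight Delta k2 x.
Proof.
  intros HD. unfold weight. rewrite <- (sqrt_pow2 Delta) at 1 by lra.
  apply sqrt_le_1_alt. pose proof (Rabs_pos (k2 x - Delta ^ 2)). lra.
Qed.

Lemma weight_above Delta k2 x : Delta ^ 2 <= k2 x -> weight Delta k2 x = sqrt (k2 x).
Proof. intros H. unfold weight. rewrite Rabs_right by lra. f_equal; ring. Qed.

Lemma weight_below Delta k2 x : k2 x <= Delta ^ 2 ->
  weight Delta k2 x = sqrt (2 * Delta ^ 2 - k2 x).
Proof. intros H. unfold weight. rewrite Rabs_left1 by lra. f_equal; ring. Qed.

Lemma weight_sq_below Delta k2 x : k2 x <= Delta ^ 2 -> weight Delta k2 x ^ 2 = 2 * Delta ^ 2 - k2 x.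
Proof. intros H. rewrite weight_below, pow2_sqrt by nra. reflexivity. Qed.

Lemma weight_at_threshold Delta k2 x : 0 < Delta -> k2 x = Delta ^ 2 -> weight Delta k2 x = Delta.
Proof. intros HD H. rewrite weight_above by lra. rewrite H. apply sqrt_pow2. lra. Qed.

Lemma weight_limit Delta k2 k : 0 < k -> Delta ^ 2 <= k ^ 2 -> lim_pinf k2 (k ^ 2) ->
  lim_pinf (weight Delta k2) k.
Proof.
  intros Hk HDk Hlim.
  assert (Hc : continuity_pt (fun t => sqrt (Delta ^ 2 + Rabs (t - Delta ^ 2))) (k ^ 2)).
  { apply cont_comp.
    - apply cont_plus; [apply cont_const|].
      apply cont_comp; [apply cont_minus; [apply cont_id | apply cont_const] | apply Rcontinuity_abs].
    - apply continuity_pt_sqrt. pose proof (Rabs_pos (k ^ 2 - Delta ^ 2)). nra. }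
  pose proof (lim_pinf_comp _ _ _ Hlim Hc) as L. cbv beta in L.
  rewrite Rabs_right in L by lra.
  replace (Delta ^ 2 + (k ^ 2 - Delta ^ 2)) with (k ^ 2) in L by ring.
  now rewrite sqrt_pow2 in L by lra.
Qed.

Section BarrierIntegral.
Variables (k2 : R -> R) (Delta : R).
Hypothesis Hcont : continuity k2.

Lemma barrier_cont x : continuity_pt (barrier Delta k2) x.
Proof.
  apply (cont_comp sqrt (fun z => Rmax 0 (Delta ^ 2 - k2 z))).
  - apply cont_ext with (fun z => ((Delta ^ 2 - k2 z) + Rabs (Delta ^ 2 - k2 z)) / 2).
    { intros z. unfold Rmax. destruct (Rle_dec 0 (Delta ^ 2 - k2 z)).
      - rewrite Rabs_right by lra. field.
      - rewrite Rabs_left by lra. field. }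
    apply cont_div; [| apply cont_const | lra].
    apply cont_plus; [| apply cont_comp; [| apply Rcontinuity_abs]];
      apply cont_minus; [apply cont_const | apply Hcont | apply cont_const | apply Hcont].
  - apply continuity_pt_sqrt. apply Rmax_l.
Qed.

Lemma barrier_integrable a b : a <= b -> Riemann_integrable (barrier Delta k2) a b.
Proof. intros Hab. apply continuity_implies_RiemannInt; auto using barrier_cont. Qed.

Definition barrier_int (a b : R) : R :=
  match Rle_dec a b with
  | left H => RiemannInt (barrier_integrable a b H)
  | right _ => 0
  end.

Lemma barrier_int_eq a b (pr : Riemann_integrable (barrier Delta k2) a b) :
  a <= b -> barrier_int a b = RiemannInt pr.
Proof. intros Hab. unfold barrier_int. destruct (Rle_dec a b); [apply RiemannInt_P5 | lra]. Qed.

Lemma barrier_int_chasles a b c : a <= b -> b <= c ->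
  barrier_int a b + barrier_int b c = barrier_int a c.
Proof.
  intros H1 H2. rewrite (barrier_int_eq a b (barrier_integrable a b H1) H1),
    (barrier_int_eq b c (barrier_integrable b c H2) H2),
    (barrier_int_eq a c (barrier_integrable a c ltac:(lra)) ltac:(lra)).
  apply RiemannInt_P26.
Qed.

Lemma barrier_int_nonneg a b : a <= b -> 0 <= barrier_int a b.
Proof.
  intros Hab. rewrite (barrier_int_eq a b (barrier_integrable a b Hab) Hab).
  rewrite <- (Rmult_0_l (b - a)), <- (RiemannInt_P15 (RiemannInt_P14 a b 0)).
  apply RiemannInt_P19; [exact Hab |]. intros. apply sqrt_pos.
Qed.
Lemma barrier_int_le_improper I : improper_integral_R (barrier Delta k2) I ->
  forall x y, x <= y -> barrier_int x y <= I.
Proof.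
  intros [_ HI] x y Hxy. apply Rnot_lt_le. intros Hlt.
  destruct (HI (barrier_int x y - I)) as [M HM]; [lra|].
  set (a := Rmin x (- M)). set (b := Rmax y M).
  pose proof (Rmin_l x (- M)). pose proof (Rmin_r x (- M)).
  pose proof (Rmax_l y M). pose proof (Rmax_r y M).
  assert (Hab : a <= b) by (unfold a, b; lra).
  specialize (HM a b (barrier_integrable a b Hab) ltac:(unfold a; lra) ltac:(unfold b; lra)).
  rewrite <- (barrier_int_eq a b _ Hab), <- (barrier_int_chasles a x b),
    <- (barrier_int_chasles x y b) in HM by (unfold a, b; lra).
  pose proof (barrier_int_nonneg a x ltac:(unfold a; lra)).
  pose proof (barrier_int_nonneg y b ltac:(unfold b; lra)).
  apply Rabs_def2 in HM. lra.
Qed.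

End BarrierIntegral.

Lemma ratio_le_scaled C p q k D e : 0 < D -> D <= q -> D <= k -> 0 <= p -> 0 <= C -> 0 <= e ->
  C * (p / q) * e <= C * (k * p / D ^ 2) * e.
Proof.
  intros HD Hq Hk Hp HC He. apply Rmult_le_compat_r; [exact He|]. apply Rmult_le_compat_l; [exact HC|].
  apply Rle_trans with (p / D); unfold Rdiv.
  - apply Rmult_le_compat_l; [exact Hp|]. apply Rinv_le_contravar; lra.
  - replace (k * p * / D ^ 2) with (p * / D * (k / D)) by (field; lra).
    rewrite <- (Rmult_1_r (p * / D)) at 1. apply Rmult_le_compat_l.
    + apply Rmult_le_pos; [lra | apply Rlt_le, Rinv_0_lt_compat; lra].
    + apply Rmult_le_reg_r with D; [lra|]. field_simplify; lra.
Qed.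

(* The factors h^1 and h^-1, written exp(s ln h) in the growth estimate. *)
Lemma exp_ln_one h : 0 < h -> exp (1 * ln h) = h.
Proof. intros. rewrite Rmult_1_l. now apply exp_ln. Qed.

Lemma exp_ln_minus_one h : 0 < h -> exp (-1 * ln h) = / h.
Proof. intros. replace (-1 * ln h) with (- ln h) by ring. now rewrite exp_Ropp, exp_ln. Qed.

(* Chaining a decreasing-weight step through a point where the weight equals D with an
   increasing-weight step:  A/a <= (B/D) e1  and  B D <= C c e2  give  A <= C (a c / D^2) e1 e2. *)
Lemma chain_through_threshold A B C a c D e1 e2 : 0 < a -> 0 < D ->
  A * / a <= B * / D * e1 -> B * D <= C * c * e2 -> 0 <= e1 ->
  A <= C * (a * c / D ^ 2) * (e1 * e2).
Proof.
  intros Ha HD H1 H2 He1.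
  assert (H1' : A <= B * e1 * (a / D)).
  { apply Rmult_le_reg_r with (/ a); [now apply Rinv_0_lt_compat|].
    replace (B * e1 * (a / D) * / a) with (B * / D * e1) by (field; lra). lra. }
  assert (H2' : B <= C * c * e2 / D).
  { apply Rmult_le_reg_r with D; [lra|].
    replace (C * c * e2 / D * D) with (C * c * e2) by (field; lra). lra. }
  apply Rle_trans with (C * c * e2 / D * e1 * (a / D)); [| right; field; lra].
  eapply Rle_trans; [exact H1'|]. apply Rmult_le_compat_r; [apply Rlt_le, Rdiv_lt_0_compat; lra|].
  apply Rmult_le_compat_r; lra.
Qed.

Lemma well_below_limits k2 x0 km kp : lim_minf k2 (km ^ 2) -> lim_pinf k2 (kp ^ 2) ->
  (forall x y, x <= y -> y <= x0 -> k2 y <= k2 x) -> (forall x y, x0 <= x -> x <= y -> k2 x <= k2 y) ->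
  (forall x, x <= x0 -> k2 x <= km ^ 2) /\ (forall x, x0 <= x -> k2 x <= kp ^ 2).
Proof.
  intros Hlimm Hlimp Hdec Hinc. split; intros x Hx.
  - replace x with (- - x) by ring.
    apply (le_lim_of_nondecreasing (fun y => k2 (- y)) _ (- x0)); [now apply lim_minf_reflect | | lra].
    intros u v Hu Hv. apply Hdec; lra.
  - eapply le_lim_of_nondecreasing; eauto.
Qed.

Section Transfer.
Variables (k2 d : R -> R) (pts : list R) (x0 Delta km kp : R) (ur ui dur dui : R -> R) (J eps : R).
Hypotheses (Hcont : continuity k2) (Hderiv : forall x, ~ In x pts -> derivable_pt_lim k2 x (d x)).
Hypotheses (Hdec : forall x y, x <= y -> y <= x0 -> k2 y <= k2 x)
  (Hinc : forall x y, x0 <= x -> x <= y -> k2 x <= k2 y).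
Hypotheses (HDelta : 0 < Delta) (Heps : 0 < eps) (Hx0 : k2 x0 <= Delta ^ 2).
Hypotheses (Hkm : Delta <= km) (Hkp : Delta <= kp)
  (HkL : forall x, x <= x0 -> k2 x <= km ^ 2) (HkR : forall x, x0 <= x -> k2 x <= kp ^ 2).
Hypotheses (Hur : solution k2 ur dur) (Hui : solution k2 ui dui)
  (HJ : forall x, wronskian ur ui dur dui x = J).

Let h := weight Delta k2.
Let Y (z : R) : R := regularized J eps (energy ur ui dur dui (h z) z).
Let Int := barrier_int k2 Delta Hcont.

Lemma weight_pos z : 0 < h z.
Proof. pose proof (weight_ge Delta k2 z HDelta). unfold h. lra. Qed.

Lemma Y_nonneg z : 0 <= Y z.
Proof. apply regularized_nonneg, energy_nonneg, weight_pos. Qed.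

(* Above the threshold h = sqrt(k2) is monotone with k2. *)
Lemma growth_above a b s : a <= b -> (s = 1 \/ s = -1) ->
  (forall z, a <= z <= b -> Delta ^ 2 <= k2 z) -> monotone_on s k2 a b ->
  Y a * exp (s * ln (h a)) <= Y b * exp (s * ln (h b)) * exp (2 * Int a b).
Proof.
  intros Hab Hs Hk Hm. unfold Y, Int, h.
  rewrite (barrier_int_eq k2 Delta Hcont a b (barrier_integrable k2 Delta Hcont a b Hab) Hab).
  rewrite !(weight_above Delta k2) by (apply Hk; lra).
  assert (HD2 : 0 < Delta ^ 2) by (apply pow_lt; lra).
  apply (energy_growth k2 ur ui dur dui J Hur Hui HJ (fun z => sqrt (k2 z))
    (fun z => / (2 * sqrt (k2 z)) * d z) _ eps s a b pts); auto.
  - intros z Hz. specialize (Hk z Hz). repeat split.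
    + apply cont_comp; [apply Hcont | apply continuity_pt_sqrt; lra].
    + apply sqrt_lt_R0; lra.
    + apply barrier_cont, Hcont.
  - intros z Hz Hn. assert (Hkz := Hk z ltac:(lra)).
    pose proof (sqrt_lt_R0 (k2 z) ltac:(lra)). split.
    + eapply dlim_comp; [apply (Hderiv z Hn) | apply derivable_pt_lim_sqrt; lra | ring].
    + pose proof (deriv_sign_of_monotone _ _ _ _ _ _ Hm Hz (Hderiv z Hn)).
      replace (s * (/ (2 * sqrt (k2 z)) * d z)) with (/ (2 * sqrt (k2 z)) * (s * d z)) by ring.
      apply Rmult_le_pos; [apply Rlt_le, Rinv_0_lt_compat|]; lra.
  - intros z Hz. specialize (Hk z Hz). rewrite pow2_sqrt, Rminus_diag, Rabs_R0 by lra.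
    pose proof (sqrt_pos (k2 z)). pose proof (sqrt_pos (Rmax 0 (Delta ^ 2 - k2 z))).
    unfold barrier. apply Rmult_le_pos; lra.
Qed.

(* Below the threshold h = sqrt(2 Delta^2 - k2) is monotone against k2. *)
Lemma growth_below a b s : a <= b -> (s = 1 \/ s = -1) ->
  (forall z, a <= z <= b -> k2 z <= Delta ^ 2) -> monotone_on s (fun z => - k2 z) a b ->
  Y a * exp (s * ln (h a)) <= Y b * exp (s * ln (h b)) * exp (2 * Int a b).
Proof.
  intros Hab Hs Hk Hm. unfold Y, Int, h.
  rewrite (barrier_int_eq k2 Delta Hcont a b (barrier_integrable k2 Delta Hcont a b Hab) Hab).
  rewrite !(weight_below Delta k2) by (apply Hk; lra).
  assert (HD2 : 0 < Delta ^ 2) by (apply pow_lt; lra).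
  apply (energy_growth k2 ur ui dur dui J Hur Hui HJ (fun z => sqrt (2 * Delta ^ 2 - k2 z))
    (fun z => / (2 * sqrt (2 * Delta ^ 2 - k2 z)) * - d z) _ eps s a b pts); auto.
  - intros z Hz. specialize (Hk z Hz). repeat split.
    + apply cont_comp; [apply cont_minus; [apply cont_const | apply Hcont] | apply continuity_pt_sqrt; lra].
    + apply sqrt_lt_R0; lra.
    + apply barrier_cont, Hcont.
  - intros z Hz Hn. assert (Hkz := Hk z ltac:(lra)).
    pose proof (sqrt_lt_R0 (2 * Delta ^ 2 - k2 z) ltac:(lra)). split.
    + eapply dlim_comp; [eapply dlim_minus; [apply dlim_const | apply (Hderiv z Hn) | reflexivity]
        | apply derivable_pt_lim_sqrt; lra | ring].
    + pose proof (deriv_sign_of_monotone _ _ _ _ _ _ Hm Hz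
        (dlim_opp _ _ _ _ (Hderiv z Hn) eq_refl)).
      replace (s * (/ (2 * sqrt (2 * Delta ^ 2 - k2 z)) * - d z))
        with (/ (2 * sqrt (2 * Delta ^ 2 - k2 z)) * (s * - d z)) by ring.
      apply Rmult_le_pos; [apply Rlt_le, Rinv_0_lt_compat|]; lra.
  - intros z Hz. specialize (Hk z Hz). unfold barrier.
    rewrite pow2_sqrt, Rmax_right, Rabs_right by lra.
    pose proof (sqrt_le_1_alt (Delta ^ 2 - k2 z) (2 * Delta ^ 2 - k2 z) ltac:(lra)).
    pose proof (sqrt_sqrt (Delta ^ 2 - k2 z) ltac:(lra)).
    pose proof (sqrt_pos (Delta ^ 2 - k2 z)). nra.
Qed.

(* Left of x0, k2 is nonincreasing: Y h grows below the threshold and Y/h grows above it. *)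
Lemma transfer_left x : x <= x0 ->
  Y x <= Y x0 * (km * h x0 / Delta ^ 2) * exp (2 * Int x x0).
Proof.
  intros Hx. pose proof (weight_pos x) as Hhx. pose proof (weight_pos x0) as Hh0.
  pose proof (Y_nonneg x0).
  destruct (Rle_dec (k2 x) (Delta ^ 2)) as [Hk|Hk].
  - pose proof (growth_below x x0 1 Hx (or_introl eq_refl)) as G.
    specialize (G ltac:(intros z Hz; pose proof (Hdec x z ltac:(lra) ltac:(lra)); lra)
                  ltac:(intros u v ? ? ?; pose proof (Hdec u v ltac:(lra) ltac:(lra)); lra)).
    rewrite !exp_ln_one in G by apply weight_pos.
    eapply Rle_trans; [| apply (ratio_le_scaled _ (h x0) (h x));
      [lra | apply weight_ge; lra | lra | lra | lra | left; apply exp_pos]].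
    apply Rmult_le_reg_r with (h x); [auto|].
    replace (Y x0 * (h x0 / h x) * exp (2 * Int x x0) * h x)
      with (Y x0 * h x0 * exp (2 * Int x x0)) by (field; lra). lra.
  - destruct (IVT_cor (fun z => k2 z - Delta ^ 2) x x0) as [al [Hal Hal2]]; auto.
    { intros z. apply cont_minus; [apply Hcont | apply cont_const]. }
    { pose proof (Hdec x x0 Hx (Rle_refl _)). nra. }
    simpl in Hal2.
    pose proof (growth_above x al (-1) ltac:(lra) (or_intror eq_refl)) as G1.
    pose proof (growth_below al x0 1 ltac:(lra) (or_introl eq_refl)) as G2.
    specialize (G1 ltac:(intros z Hz; pose proof (Hdec z al ltac:(lra) ltac:(lra)); lra)
                   ltac:(intros u v ? ? ?; pose proof (Hdec u v ltac:(lra) ltac:(lra)); lra)).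
    specialize (G2 ltac:(intros z Hz; pose proof (Hdec al z ltac:(lra) ltac:(lra)); lra)
                   ltac:(intros u v ? ? ?; pose proof (Hdec u v ltac:(lra) ltac:(lra)); lra)).
    rewrite !exp_ln_minus_one in G1 by apply weight_pos.
    rewrite !exp_ln_one in G2 by apply weight_pos.
    unfold h in G1, G2. rewrite (weight_at_threshold Delta k2 al) in G1, G2 by lra. fold h in G1, G2.
    assert (Hhx_km : h x <= km).
    { unfold h. rewrite weight_above, <- (sqrt_pow2 km) by lra. apply sqrt_le_1_alt, HkL, Hx. }
    unfold Int. rewrite <- (barrier_int_chasles k2 Delta Hcont x al x0), Rmult_plus_distr_l, exp_plus
      by lra.
    eapply Rle_trans; [apply (chain_through_threshold _ _ _ _ _ _ _ _ Hhx HDelta G1 G2);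
      left; apply exp_pos |].
    apply Rmult_le_compat_r; [left; apply Rmult_lt_0_compat; apply exp_pos|].
    apply Rmult_le_compat_l; [auto|]. unfold Rdiv. apply Rmult_le_compat_r.
    + left. apply Rinv_0_lt_compat, pow_lt. lra.
    + apply Rmult_le_compat_r; lra.
Qed.

(* Right of x0, k2 is nondecreasing: Y/h grows below the threshold and Y h grows above it. *)
Lemma transfer_right y : x0 <= y ->
  Y x0 <= Y y * (h x0 * kp / Delta ^ 2) * exp (2 * Int x0 y).
Proof.
  intros Hy. pose proof (weight_pos y) as Hhy. pose proof (weight_pos x0) as Hh0.
  pose proof (Y_nonneg y).
  destruct (Rle_dec (k2 y) (Delta ^ 2)) as [Hk|Hk].
  - pose proof (growth_below x0 y (-1) Hy (or_intror eq_refl)) as G.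
    specialize (G ltac:(intros z Hz; pose proof (Hinc z y ltac:(lra) ltac:(lra)); lra)
                  ltac:(intros u v ? ? ?; pose proof (Hinc u v ltac:(lra) ltac:(lra)); lra)).
    rewrite !exp_ln_minus_one in G by apply weight_pos.
    rewrite (Rmult_comm (h x0) kp).
    eapply Rle_trans; [| apply (ratio_le_scaled _ (h x0) (h y));
      [lra | apply weight_ge; lra | lra | lra | lra | left; apply exp_pos]].
    apply Rmult_le_reg_r with (/ h x0); [now apply Rinv_0_lt_compat|].
    replace (Y y * (h x0 / h y) * exp (2 * Int x0 y) * / h x0)
      with (Y y * / h y * exp (2 * Int x0 y)) by (field; lra). lra.
  - destruct (IVT_cor (fun z => k2 z - Delta ^ 2) x0 y) as [be [Hbe Hbe2]]; auto.
    { intros z. apply cont_minus; [apply Hcont | apply cont_const]. }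
    { pose proof (Hinc x0 y (Rle_refl _) Hy). nra. }
    simpl in Hbe2.
    pose proof (growth_below x0 be (-1) ltac:(lra) (or_intror eq_refl)) as G1.
    pose proof (growth_above be y 1 ltac:(lra) (or_introl eq_refl)) as G2.
    specialize (G1 ltac:(intros z Hz; pose proof (Hinc z be ltac:(lra) ltac:(lra)); lra)
                   ltac:(intros u v ? ? ?; pose proof (Hinc u v ltac:(lra) ltac:(lra)); lra)).
    specialize (G2 ltac:(intros z Hz; pose proof (Hinc be z ltac:(lra) ltac:(lra)); lra)
                   ltac:(intros u v ? ? ?; pose proof (Hinc u v ltac:(lra) ltac:(lra)); lra)).
    rewrite !exp_ln_minus_one in G1 by apply weight_pos.
    rewrite !exp_ln_one in G2 by apply weight_pos.
    unfold h in G1, G2. rewrite (weight_at_threshold Delta k2 be) in G1, G2 by lra. fold h in G1, G2.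
    assert (Hhy_kp : h y <= kp).
    { unfold h. rewrite weight_above, <- (sqrt_pow2 kp) by lra. apply sqrt_le_1_alt, HkR, Hy. }
    unfold Int. rewrite <- (barrier_int_chasles k2 Delta Hcont x0 be y), Rmult_plus_distr_l, exp_plus
      by lra.
    eapply Rle_trans; [apply (chain_through_threshold _ _ _ _ _ _ _ _ Hh0 HDelta G1 G2);
      left; apply exp_pos |].
    apply Rmult_le_compat_r; [left; apply Rmult_lt_0_compat; apply exp_pos|].
    apply Rmult_le_compat_l; [auto|]. unfold Rdiv. apply Rmult_le_compat_r.
    + left. apply Rinv_0_lt_compat, pow_lt. lra.
    + apply Rmult_le_compat_l; lra.
Qed.

Lemma energy_transfer x y : x <= x0 -> x0 <= y ->
  Y x <= Y y * ((km * h x0 / Delta ^ 2) * (h x0 * kp / Delta ^ 2)) * exp (2 * Int x y).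
Proof.
  intros Hx Hy. pose proof (transfer_left x Hx) as L. pose proof (transfer_right y Hy) as R.
  assert (0 <= km * h x0 / Delta ^ 2).
  { pose proof (weight_pos x0). apply Rmult_le_pos; [nra | left; apply Rinv_0_lt_compat, pow_lt; lra]. }
  pose proof (exp_pos (2 * Int x x0)).
  unfold Int. rewrite <- (barrier_int_chasles k2 Delta Hcont x x0 y), Rmult_plus_distr_l, exp_plus by lra.
  fold Int. eapply Rle_trans; [exact L|].
  replace (Y y * (km * h x0 / Delta ^ 2 * (h x0 * kp / Delta ^ 2)) * (exp (2 * Int x x0) * exp (2 * Int x0 y)))
    with (Y y * (h x0 * kp / Delta ^ 2) * exp (2 * Int x0 y) * ((km * h x0 / Delta ^ 2) * exp (2 * Int x x0)))
    by ring.
  rewrite Rmult_assoc. apply Rmult_le_compat_r; [apply Rmult_le_pos; lra | exact R].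
Qed.

End Transfer.

(* The constant produced by the transfer is at most e^(2B):  (h0/Delta)^2 = 1 + (Delta^2 - k2 x0)/Delta^2
   <= 1 + (m/Delta)^2 <= e^(2m/Delta), and the barrier integral is at most its improper integral. *)
Lemma transfer_factor_bound Delta km kp h0 t m Iab I : 0 < Delta -> 0 < km -> 0 < kp ->
  0 <= h0 -> h0 ^ 2 = 2 * Delta ^ 2 - t -> t <= Delta ^ 2 -> sqrt (Delta ^ 2 - t) <= m -> Iab <= I ->
  (km * h0 / Delta ^ 2) * (h0 * kp / Delta ^ 2) * exp (2 * Iab) <=
  exp (2 * ((1 / 2) * ln (kp * km / Delta ^ 2) + m / Delta + I)).
Proof.
  intros HD Hkm Hkp Hh0 Hh2 Ht Hm HI.
  assert (HD2 : 0 < Delta ^ 2) by (apply pow_lt; lra).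
  assert (Hm0 : 0 <= m) by (pose proof (sqrt_pos (Delta ^ 2 - t)); lra).
  assert (Hm2 : Delta ^ 2 - t <= m ^ 2).
  { rewrite <- (pow2_sqrt (Delta ^ 2 - t)) by lra. pose proof (sqrt_pos (Delta ^ 2 - t)). nra. }
  assert (Hmd : 0 <= m / Delta) by (apply Rmult_le_pos; [lra | apply Rlt_le, Rinv_0_lt_compat; lra]).
  assert (Hpeak : h0 ^ 2 / Delta ^ 2 <= exp (2 * (m / Delta))).
  { replace (2 * (m / Delta)) with (m / Delta + m / Delta) by ring. rewrite exp_plus.
    pose proof (exp_ineq1_le (m / Delta)).
    apply Rle_trans with ((1 + m / Delta) * (1 + m / Delta)); [| apply Rmult_le_compat; lra].
    apply Rle_trans with (1 + (m / Delta) ^ 2); [| nra].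
    replace (1 + (m / Delta) ^ 2) with ((Delta ^ 2 + m ^ 2) / Delta ^ 2) by (field; lra).
    apply Rmult_le_compat_r; [apply Rlt_le, Rinv_0_lt_compat|]; lra. }
  assert (HkD : 0 < kp * km / Delta ^ 2) by (apply Rdiv_lt_0_compat; nra).
  replace (exp (2 * ((1 / 2) * ln (kp * km / Delta ^ 2) + m / Delta + I)))
    with (kp * km / Delta ^ 2 * exp (2 * (m / Delta)) * exp (2 * I))
    by (rewrite <- (exp_ln (kp * km / Delta ^ 2)) at 1 by exact HkD; rewrite <- !exp_plus; f_equal; field; lra).
  replace ((km * h0 / Delta ^ 2) * (h0 * kp / Delta ^ 2))
    with (kp * km / Delta ^ 2 * (h0 ^ 2 / Delta ^ 2)) by (field; lra).
  apply Rmult_le_compat.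
  - apply Rmult_le_pos; [lra | apply Rmult_le_pos; [nra | apply Rlt_le, Rinv_0_lt_compat; lra]].
  - apply Rlt_le, exp_pos.
  - apply Rmult_le_compat_l; lra.
  - destruct (Req_dec Iab I) as [->|]; [lra | apply Rlt_le, exp_increasing; lra].
Qed.

Lemma le_of_le_sqrt_eps a b c : 0 <= c -> (forall eps, 0 < eps -> a <= b + c * sqrt eps) -> a <= b.
Proof.
  intros Hc H. apply Rnot_lt_le. intros Hn.
  set (d := (a - b) / (c + 1)).
  assert (Hd : 0 < d) by (unfold d; apply Rdiv_lt_0_compat; lra).
  specialize (H (d ^ 2) ltac:(nra)). rewrite sqrt_pow2 in H by lra.
  assert (c * d < a - b); [| lra].
  unfold d. apply Rmult_lt_reg_r with (c + 1); [lra|].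
  replace (c * ((a - b) / (c + 1)) * (c + 1)) with (c * (a - b)) by (field; lra). nra.
Qed.

Lemma regularized_cont J eps t : 0 <= t ^ 2 - 4 * J ^ 2 + eps ->
  continuity_pt (regularized J eps) t.
Proof.
  intros H. apply cont_plus; [apply cont_id|].
  apply cont_comp; [| now apply continuity_pt_sqrt].
  apply cont_plus; [apply cont_minus; [apply cont_sq, cont_id | apply cont_const] | apply cont_const].
Qed.

Lemma regularized_limits (S : R -> R) J Sm Sp C x0 : lim_minf S Sm -> lim_pinf S Sp ->
  0 <= Sm ^ 2 - 4 * J ^ 2 -> Sp ^ 2 = 4 * J ^ 2 -> 0 <= C ->
  (forall eps, 0 < eps -> forall x y, x <= x0 -> x0 <= y ->
     regularized J eps (S x) <= regularized J eps (S y) * C) ->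
  Sm + sqrt (Sm ^ 2 - 4 * J ^ 2) <= Sp * C.
Proof.
  intros HSm HSp Hm Hp HC HY.
  apply (le_of_le_sqrt_eps _ _ C HC). intros eps Heps.
  pose proof (proj1 (lim_minf_reflect _ _) HSm) as HSm'.
  assert (L : lim_minf (fun x => regularized J eps (S x)) (regularized J eps Sm)).
  { apply lim_minf_reflect, (lim_pinf_comp (fun x => S (- x))); auto. apply regularized_cont. lra. }
  assert (R : lim_pinf (fun y => regularized J eps (S y) * C) (regularized J eps Sp * C)).
  { apply lim_pinf_mult; [| apply lim_pinf_const].
    apply (lim_pinf_comp S); auto. apply regularized_cont. lra. }
  pose proof (lim_le_across _ _ _ _ x0 L R (HY eps Heps)) as LE. unfold regularized in LE.
  rewrite Hp in LE. replace (4 * J ^ 2 - 4 * J ^ 2 + eps) with eps in LE by ring.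
  pose proof (sqrt_le_1_alt (Sm ^ 2 - 4 * J ^ 2) (Sm ^ 2 - 4 * J ^ 2 + eps) ltac:(lra)). nra.
Qed.

Lemma sech_sq_bound k r2 T B : 0 < k -> 0 <= r2 -> T = 1 - r2 ->
  2 * k * (1 + r2) + 4 * k * sqrt r2 <= 2 * k * T * exp (2 * B) -> T >= sech B ^ 2.
Proof.
  intros Hk Hr HT H.
  set (r := sqrt r2). assert (Hr0 : 0 <= r) by apply sqrt_pos.
  assert (Hr2 : r2 = r ^ 2) by (unfold r; rewrite pow2_sqrt; auto).
  set (e := exp B). assert (He : 0 < e) by apply exp_pos.
  set (E := e * e). assert (HEp : 0 < E) by (unfold E; nra).
  assert (HE : exp (2 * B) = E) by (unfold E, e; rewrite <- exp_plus; f_equal; ring).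
  rewrite HE in H. fold r in H. clearbody r. subst r2 T.
  assert (H2 : 1 + r <= (1 - r) * E).
  { apply Rmult_le_reg_r with (2 * k * (1 + r)); [nra|]. nra. }
  assert (Hr1 : r < 1) by nra.
  set (d := (1 - r) * E - (1 + r)).
  assert (Hf : (1 - r) * ((1 - r ^ 2) * (E + 1) ^ 2 - 4 * E) = 4 * r * d + (1 + r) * d ^ 2)
    by (unfold d; ring).
  assert (Hf2 : 0 <= (1 - r ^ 2) * (E + 1) ^ 2 - 4 * E).
  { assert (Hd : 0 <= d) by (unfold d; lra).
    apply Rmult_le_reg_l with (1 - r); [lra|]. rewrite Rmult_0_r, Hf. nra. }
  unfold sech, cosh. fold e. rewrite exp_Ropp. fold e.
  apply Rle_ge.
  replace ((/ ((e + / e) / 2)) ^ 2) with (4 * E / (E + 1) ^ 2) by (unfold E; field; nra).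
  apply Rmult_le_reg_r with ((E + 1) ^ 2); [nra|].
  unfold Rdiv. rewrite Rmult_assoc, Rinv_l by nra. lra.
Qed.

(* Energy and Wronskian of the scattering solution, read off at both ends; the end -oo is reduced to
   +oo by the reflection x -> -x, which changes the sign of the Wronskian. *)
Lemma scattering_asymptotics k2 km kp ur ui dur dui rr ri tr ti (h : R -> R) :
  0 < km -> 0 < kp -> solution k2 ur dur -> solution k2 ui dui ->
  lim_minf k2 (km ^ 2) -> lim_pinf k2 (kp ^ 2) -> lim_minf h km -> lim_pinf h kp ->
  lim_minf (fun x => ur x - (cos (km * x) + rr * cos (km * x) + ri * sin (km * x))) 0 ->
  lim_minf (fun x => ui x - (sin (km * x) + ri * cos (km * x) - rr * sin (km * x))) 0 ->
  lim_pinf (fun x => ur x - (tr * cos (kp * x) - ti * sin (kp * x))) 0 ->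
  lim_pinf (fun x => ui x - (tr * sin (kp * x) + ti * cos (kp * x))) 0 ->
  lim_minf (fun x => energy ur ui dur dui (h x) x) (2 * km * (1 + (rr ^ 2 + ri ^ 2))) /\
  lim_pinf (fun x => energy ur ui dur dui (h x) x) (2 * kp * (tr ^ 2 + ti ^ 2)) /\
  wronskian ur ui dur dui 0 = km * (1 - (rr ^ 2 + ri ^ 2)) /\
  wronskian ur ui dur dui 0 = kp * (tr ^ 2 + ti ^ 2).
Proof.
  intros Hkm Hkp Hur Hui Hk2m Hk2p Hhm Hhp HLr HLi HRr HRi.
  assert (neg_arg : forall k x, k * - x = - (k * x)) by (intros; ring).
  destruct (free_wave_asymptotics k2 ur ui dur dui h kp tr (- ti) ti tr Hkp Hur Hui Hk2p Hhp)
    as [SR JR].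
  { apply lim_pinf_ext with (2 := HRr). intros x. unfold wave. ring. }
  { apply lim_pinf_ext with (2 := HRi). intros x. unfold wave. ring. }
  destruct (free_wave_asymptotics _ _ _ _ _ (fun x => h (- x)) km (1 + rr) (- ri) ri (rr - 1) Hkm
    (solution_reflect _ _ _ Hur) (solution_reflect _ _ _ Hui)) as [SL JL].
  - now apply lim_minf_reflect.
  - now apply lim_minf_reflect.
  - apply lim_minf_reflect in HLr. apply lim_pinf_ext with (2 := HLr). intros x.
    unfold wave. rewrite !neg_arg, cos_neg, sin_neg. ring.
  - apply lim_minf_reflect in HLi. apply lim_pinf_ext with (2 := HLi). intros x.
    unfold wave. rewrite !neg_arg, cos_neg, sin_neg. ring.
  - unfold wronskian in *. rewrite Ropp_0 in JL. repeat split.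
    + apply lim_minf_reflect. replace (2 * km * (1 + (rr ^ 2 + ri ^ 2)))
        with (km * ((1 + rr) ^ 2 + (- ri) ^ 2 + ri ^ 2 + (rr - 1) ^ 2)) by ring.
      eapply lim_pinf_ext; [| exact SL]. intros x. unfold energy. f_equal; f_equal; ring.
    + replace (2 * kp * (tr ^ 2 + ti ^ 2)) with (kp * (tr ^ 2 + (- ti) ^ 2 + ti ^ 2 + tr ^ 2)) by ring.
      exact SR.
    + lra.
    + lra.
Qed.

(* The transmission bound follows from the energy transfer with constant e^(2B), once the energy is known
   at both ends: there J = kp t2 = km (1 - r2), so T = (kp/km) t2 = 1 - r2. *)
Lemma transmission_of_energy_transfer (S : R -> R) J km kp r2 t2 B x0 :
  0 < km -> 0 <= r2 -> lim_minf S (2 * km * (1 + r2)) -> lim_pinf S (2 * kp * t2) ->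
  J = km * (1 - r2) -> J = kp * t2 ->
  (forall eps, 0 < eps -> forall x y, x <= x0 -> x0 <= y ->
     regularized J eps (S x) <= regularized J eps (S y) * exp (2 * B)) ->
  kp / km * t2 >= sech B ^ 2.
Proof.
  intros Hkm Hr2 HSm HSp JL JR HY.
  pose proof (regularized_limits S J _ _ (exp (2 * B)) x0 HSm HSp) as L.
  replace ((2 * km * (1 + r2)) ^ 2 - 4 * J ^ 2) with ((4 * km) ^ 2 * r2) in L by (rewrite JL; ring).
  rewrite sqrt_mult, sqrt_pow2 in L by nra.
  apply (sech_sq_bound km r2); auto.
  - apply Rmult_eq_reg_l with km; [| lra]. field_simplify; [| lra]. lra.
  - replace (2 * km * (kp / km * t2)) with (2 * kp * t2) by (field; lra).
    apply L; [nra | rewrite JR; ring | left; apply exp_pos | exact HY].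
Qed.

Theorem mainTheorem14
  (k2 : R -> R) (km kp : R) (x0 k2min Delta m I : R)
  (ur ui : R -> R) (rr ri tr ti : R)
  (* standing setup *)
  (Hkm : 0 < km) (Hkp : 0 < kp)
  (Hlimm : lim_minf k2 (km ^ 2)) (Hlimp : lim_pinf k2 (kp ^ 2))
  (Hintm : integrable_near_minf (fun x => k2 x - km ^ 2))
  (Hintp : integrable_near_pinf (fun x => k2 x - kp ^ 2))
  (Hsol : scattering_solution k2 km kp ur ui rr ri tr ti)
  (* hypotheses of the theorem *)
  (Hcont : continuity k2) (HC1 : piecewise_C1 k2)
  (Hdec : forall x y, x <= y -> y <= x0 -> k2 y <= k2 x)
  (Hinc : forall x y, x0 <= x -> x <= y -> k2 x <= k2 y)
  (Hmin : (exists x, k2 x = k2min) /\ (forall x, k2min <= k2 x))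
  (HDelta : 0 < Delta)
  (HD1 : k2min <= Delta ^ 2) (HD2 : Delta ^ 2 <= Rmin (kp ^ 2) (km ^ 2))
  (* m = max_x sqrt(max{0, Delta^2 - k2 x}) *)
  (Hm : (exists x, m = sqrt (Rmax 0 (Delta ^ 2 - k2 x))) /\
        (forall x, sqrt (Rmax 0 (Delta ^ 2 - k2 x)) <= m))
  (* I = integral over {k2 < Delta^2} of sqrt(Delta^2 - k2) *)
  (HI : improper_integral_R (fun x => sqrt (Rmax 0 (Delta ^ 2 - k2 x))) I) :
  transmission km kp tr ti >=
    (sech ((1 / 2) * ln (kp * km / Delta ^ 2) + m / Delta + I)) ^ 2.
Proof.
  destruct Hsol as [[dur Hur] [[dui Hui] [HLr [HLi [HRr HRi]]]]].
  destruct HC1 as [pts [d Hd]].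
  assert (Hderiv : forall x, ~ In x pts -> derivable_pt_lim k2 x (d x)) by apply Hd.
  pose proof (Rmin_l (kp ^ 2) (km ^ 2)). pose proof (Rmin_r (kp ^ 2) (km ^ 2)).
  assert (HDkm : Delta <= km) by nra. assert (HDkp : Delta <= kp) by nra.
  assert (Hx0 : k2 x0 <= Delta ^ 2).
  { destruct Hmin as [[x1 <-] _].
    destruct (Rle_dec x1 x0); [pose proof (Hdec x1 x0) | pose proof (Hinc x0 x1)]; lra. }
  destruct (well_below_limits k2 x0 km kp Hlimm Hlimp Hdec Hinc) as [HkL HkR].
  destruct (scattering_asymptotics k2 km kp ur ui dur dui rr ri tr ti (weight Delta k2))
    as [SL [SR [JL JR]]]; auto.
  - apply lim_minf_reflect, weight_limit; [lra | lra | now apply lim_minf_reflect].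
  - apply weight_limit; auto; lra.
  - unfold transmission.
    eapply (transmission_of_energy_transfer _ _ km kp _ _ _ x0 Hkm); eauto; [nra |].
    intros eps Heps x y Hx Hy.
    eapply Rle_trans; [exact (energy_transfer k2 d pts x0 Delta km kp ur ui dur dui _ eps Hcont Hderiv
      Hdec Hinc HDelta Heps Hx0 HDkm HDkp HkL HkR Hur Hui (wronskian_const k2 ur ui dur dui Hur Hui)
      x y Hx Hy) |].
    cbv beta. rewrite Rmult_assoc.
    apply Rmult_le_compat_l; [apply regularized_nonneg, energy_nonneg, weight_pos; lra |].
    apply (transfer_factor_bound _ _ _ _ (k2 x0)); auto using weight_sq_below.
    + apply sqrt_pos.
    + destruct Hm as [_ Hm]. specialize (Hm x0). now rewrite Rmax_right in Hm by lra.
    + apply (barrier_int_le_improper k2 Delta Hcont I HI). lra.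
Qed.
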